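(* Let $k\ge\ell\ge\ell'\ge t\ge1$ be integers and, for $i\in[2]$, let $\omega_i:[0,k]\to\mathbb{R}_{\ge0}$ be non-increasing functions. Let $\mathcal{F}\subseteq\{F\subseteq[k]:|F|\le\ell\}$ and $\mathcal{G}\subseteq\{G\subseteq[k]:|G|\le\ell'\}$ be non-empty cross $t$-intersecting families with maximal necessary intersection point $a$. Suppose that $a\ge t+1$, $\mathcal{F}\setminus\mathcal{F}^a\neq\emptyset$ and $\mathcal{G}\setminus\mathcal{G}^a\ne\emptyset$. Then there are families $\mathcal{F}^*\subseteq\{F\subseteq[k]:|F|\le\ell\}$ and $\mathcal{G}^*\subseteq\{G\subseteq[k]:|G|\le\ell'\}$ such that (1) $\mathcal{F}^*,\mathcal{G}^*$ are non-empty and cross $t$-intersecting; (2) $\omega_1(\mathcal{F}^* )+\omega_2(\mathcal{G}^* )\ge\omega_1(\mathcal{F})+\omega_2(\mathcal{G})$; (3) the maximal necessary intersection point of $\mathcal{F}^*$ and $\mathcal{G}^*$ is smaller than $a$. Moreover, (4) such $\mathcal{F}^*,\mathcal{G}^*$ satisfying (1)–(3) can be chosen to be shifted.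
   Context: Families are cross $t$-intersecting if $|F\cap G|\ge t$ for all $F\in\mathcal{F},G\in\mathcal{G}$. For cross $t$-intersecting $\mathcal{F},\mathcal{G}\subseteq2^{[k]}$, $a\in[k]$ is a necessary intersection point if there exist $F\in\mathcal{F},G\in\mathcal{G}$ with $|[a]\cap F\cap G|=t$ and $a\in F\cap G$; the maximal one is the largest such $a$. With $a$ the maximal necessary intersection point, $\mathcal{F}^a=\{F\in\mathcal{F}:\exists G\in\mathcal{G},\ |[a]\cap F\cap G|=t,\ a\in F\cap G\}$ and $\mathcal{G}^a=\{G\in\mathcal{G}:\exists F\in\mathcal{F},\ |[a]\cap F\cap G|=t,\ a\in F\cap G\}$. For $\omega:[0,k]\to\mathbb{R}_{\ge0}$, $\omega(F)=\omega(|F|)$ and $\omega(\mathcal{F})=\sum_{F\in\mathcal{F}}\omega(F)$; non-increasing means $\omega(i)\ge\omega(j)$ for $i\le j$. The shifting operator: for $i<j$, $s_{i,j}(F)=(F\setminus\{j\})\cup\{i\}$ if $j\in F$, $i\notin F$ and $(F\setminus\{j\})\cup\{i\}\notin\mathcal{F}$, else $s_{i,j}(F)=F$; $s_{i,j}(\mathcal{F})=\{s_{i,j}(F):F\in\mathcal{F}\}$. A family $\mathcal{F}\subseteq2^{[k]}$ is shifted if $s_{i,j}(\mathcal{F})=\mathcal{F}$ for all $1\le i<j\le k$. *)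

(* Ground set [k] = {1,...,k} is represented by 'I_k, the
   element x : 'I_k standing for x+1 (order-preserving relabelling). *)
From HB Require Import structures.
From mathcomp Require Import all_boot all_order all_algebra.
Set Implicit Arguments. Unset Strict Implicit. Unset Printing Implicit Defensive.
Import Order.TTheory GRing.Theory Num.Theory.

Section Defs.
Variable k : nat.

Definition cross_t_intersecting (t : nat) (FF GG : {set {set 'I_k}}) : Prop :=
  forall F G, F \in FF -> G \in GG -> t <= #|F :&: G|.

Definition nip_pair (t : nat) (a : 'I_k) (F G : {set 'I_k}) : bool :=
  (#|[set x in F :&: G | x <= a]| == t) && (a \in F :&: G).

Definition nec_int_point (t : nat) (FF GG : {set {set 'I_k}}) (a : 'I_k) : Prop :=
  exists F G, [/\ F \in FF, G \in GG & nip_pair t a F G].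

Definition max_nec_int_point (t : nat) (FF GG : {set {set 'I_k}}) (a : 'I_k) : Prop :=
  nec_int_point t FF GG a /\ forall b, nec_int_point t FF GG b -> b <= a.

Definition fam_a (t : nat) (FF GG : {set {set 'I_k}}) (a : 'I_k) : {set {set 'I_k}} :=
  [set F in FF | [exists G in GG, nip_pair t a F G]].
Definition fam_a' (t : nat) (FF GG : {set {set 'I_k}}) (a : 'I_k) : {set {set 'I_k}} :=
  [set G in GG | [exists F in FF, nip_pair t a F G]].

Definition shift_set (FF : {set {set 'I_k}}) (i j : 'I_k) (F : {set 'I_k}) : {set 'I_k} :=
  if [&& j \in F, i \notin F & (i |: (F :\ j)) \notin FF] then i |: (F :\ j) else F.
Definition shift_fam (FF : {set {set 'I_k}}) (i j : 'I_k) : {set {set 'I_k}} :=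
  [set shift_set FF i j F | F in FF].
Definition shifted (FF : {set {set 'I_k}}) : Prop :=
  forall i j : 'I_k, i < j -> shift_fam FF i j = FF.

Definition weight (R : numDomainType) (w : nat -> R) (FF : {set {set 'I_k}}) : R :=
  (\sum_(F in FF) w #|F|)%R.

End Defs.

(* Let a be the maximal necessary intersection point, so that any F in FF and
   G in GG share at least t elements up to a.  Removing a from the members of
   F^a and adding the results to FF, while deleting G^a from GG, yields
   families whose members share at least t elements strictly below a; the new
   sets F \ a are not already in FF, since they would meet the partner G of F in
   only t - 1 points up to a.  This operation changes the total weight by at
   least w1(F^a) - w2(G^a), and the symmetric one (with the roles of the two
   families exchanged) by at least w2(G^a) - w1(F^a), so one of them does not
   lose weight.  Shifting preserves sizes, weights and cross t-intersection
   below a, and strictly decreases the sum of all elements of all members, so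
   it ends in shifted families; cross t-intersection below a forces every
   necessary intersection point of these families to lie below a. *)

From HB Require Import structures.
From mathcomp Require Import all_boot all_order all_algebra.
From mathcomp Require Import zify lra.
Import Order.TTheory GRing.Theory Num.Theory.
Set Implicit Arguments. Unset Strict Implicit. Unset Printing Implicit Defensive.

Section Prefix.
Variable k : nat.
Implicit Types (S Y F G : {set 'I_k}).

Lemma card_prefix_le S (a : 'I_k) :
  #|[set x in S | x <= a]| = (a \in S) + #|[set x in S | x < a]|.
Proof.
rewrite (cardsD1 a) !inE leqnn andbT; congr (_ + _); apply: eq_card => x.
by rewrite !inE ltn_neqAle -val_eqE andbCA.
Qed.

Lemma exists_prefix_card (t : nat) S : 0 < t -> t <= #|S| ->
  exists2 b, b \in S & #|[set x in S | x <= b]| = t.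
Proof.
move=> t_gt0 t_le_S; pose cnt n := #|[set x in S | x < n]|.
have cntS (b : 'I_k) : cnt b.+1 = (b \in S) + cnt b.
  by rewrite -card_prefix_le; apply: eq_card => x; rewrite !inE ltnS.
have cnt_k : cnt k = #|S| by apply: eq_card => x; rewrite !inE ltn_ord andbT.
have exn : exists n, t <= cnt n by exists k; rewrite cnt_k.
have cnt0 : cnt 0 = 0 by apply: eq_card0 => x; rewrite !inE ltn0 andbF.
(* the witness is n - 1 for the least n with t <= cnt n *)
case: (ex_minnP exn) => -[|n] t_le n_min; first by move: t_le; rewrite cnt0 leqNgt t_gt0.
have n_lt_k : n < k by apply: n_min; rewrite cnt_k.
have cnt_n_lt : cnt n < t by rewrite ltnNge; apply/negP => /n_min; rewrite ltnn.
move: t_le; rewrite (cntS (Ordinal n_lt_k)) => t_le.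
have b_in : Ordinal n_lt_k \in S by apply: contraLR t_le => /negbTE->; rewrite -ltnNge.
exists (Ordinal n_lt_k) => //; apply/eqP.
by rewrite card_prefix_le eqn_leq t_le andbT b_in.
Qed.

Lemma card_prefix_swap Y Y' (i j : 'I_k) (m : nat) :
  i < j -> i \notin Y -> Y :\ j \subset Y' -> (j \in Y -> i \in Y') ->
  #|[set x in Y | x < m]| <= #|[set x in Y' | x < m]|.
Proof.
move=> ij iY /subsetP sub ji.
pose swap x := if x == j then i else x.
have inj_swap : {in [set x in Y | x < m] &, injective swap}.
  move=> x y; rewrite !inE /swap => /andP[xY _] /andP[yY _].
  case: eqP => [->|_]; case: eqP => [->|_] // e; move: iY.
  - by rewrite e yY.
  - by rewrite -e xY.
rewrite -(card_in_imset inj_swap); apply/subset_leq_card/subsetP => z /imsetP[x].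
rewrite !inE /swap => /andP[xY xm] ->; case: eqP => [xj|/eqP xj].
  by move: xY xm; rewrite xj => /ji -> /(ltn_trans ij) ->.
by rewrite sub ?inE ?xj.
Qed.

Lemma card_prefix_lt_setD1I F G (a : 'I_k) :
  #|[set x in (F :\ a) :&: G | x < a]| = #|[set x in F :&: G | x < a]|.
Proof.
apply: eq_card => x; rewrite !inE.
by have [->|] := eqVneq x a; rewrite ?ltnn ?andbF.
Qed.

End Prefix.

Section Shifting.
Variable k : nat.
Implicit Types (F : {set 'I_k}) (FF GG : {set {set 'I_k}}).

Variant shift_set_spec FF (i j : 'I_k) F : {set 'I_k} -> Prop :=
  | ShiftSetFixed : shift_set_spec FF i j F F
  | ShiftSetMoved of j \in F & i \notin F & i |: (F :\ j) \notin FF :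
      shift_set_spec FF i j F (i |: (F :\ j)).

Lemma shift_setP FF (i j : 'I_k) F : shift_set_spec FF i j F (shift_set FF i j F).
Proof.
by rewrite /shift_set; case: ifP => [/and3P[]|_]; constructor.
Qed.

Lemma card_shift_set FF (i j : 'I_k) F : #|shift_set FF i j F| = #|F|.
Proof.
case: shift_setP => // jF iF _.
by rewrite cardsU1 !inE negb_and negbK iF orbT (cardsD1 j F) jF.
Qed.

Lemma shift_set_inj FF (i j : 'I_k) : {in FF &, injective (shift_set FF i j)}.
Proof.
have unshift F : j \in F -> i \notin F -> j |: ((i |: (F :\ j)) :\ i) = F.
  move=> jF iF; apply/setP => x; rewrite !inE.
  have [->|_] := eqVneq x j; first by rewrite jF.
  by have [->|_] := eqVneq x i; rewrite ?(negbTE iF).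
move=> F1 F2 F1in F2in.
case: shift_setP => [|jF1 iF1 nF1]; case: shift_setP => [|jF2 iF2 nF2] //.
- by move=> e; move: nF2; rewrite -e F1in.
- by move=> e; move: nF1; rewrite e F2in.
by move=> e; rewrite -(unshift F1) // -(unshift F2) // e.
Qed.

Lemma shift_fam_card_le FF (i j : 'I_k) (l : nat) :
  (forall F, F \in FF -> #|F| <= l) -> forall F, F \in shift_fam FF i j -> #|F| <= l.
Proof. by move=> FF_le _ /imsetP[F Fin ->]; rewrite card_shift_set FF_le. Qed.

Lemma shift_fam_eq0 FF (i j : 'I_k) : (shift_fam FF i j == set0) = (FF == set0).
Proof. exact: imset_eq0. Qed.

Lemma weight_shift_fam (R : numDomainType) (w : nat -> R) FF (i j : 'I_k) :
  weight w (shift_fam FF i j) = weight w FF.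
Proof.
rewrite /weight big_imset; last exact: shift_set_inj.
by apply: eq_bigr => F _; rewrite card_shift_set.
Qed.

Definition potential FF := \sum_(F in FF) \sum_(x in F) (x : nat).

Lemma potential_shift_set FF (i j : 'I_k) F : i < j ->
  \sum_(x in shift_set FF i j F) (x : nat) + (shift_set FF i j F != F)
    <= \sum_(x in F) (x : nat).
Proof.
move=> ij; case: shift_setP => [|jF iF _]; first by rewrite eqxx addn0.
have -> : i |: (F :\ j) != F by apply: contraNneq iF => <-; rewrite setU11.
rewrite big_setU1 /=; last by rewrite !inE negb_and iF orbT.
by rewrite (big_setD1 j jF) addn1 -addSn leq_add2r.
Qed.

Lemma potential_shift_fam FF (i j : 'I_k) : i < j ->
  potential (shift_fam FF i j) + (shift_fam FF i j != FF) <= potential FF.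
Proof.
move=> ij; rewrite /potential big_imset /=; last exact: shift_set_inj.
pose moved F : nat := shift_set FF i j F != F.
have sum_moved : \sum_(F in FF) (\sum_(x in shift_set FF i j F) (x : nat) + moved F)
    <= \sum_(F in FF) \sum_(x in F) (x : nat).
  by apply: leq_sum => F _; apply: potential_shift_set.
apply: leq_trans sum_moved; rewrite big_split leq_add2l /=.
have [//|changed] := eqVneq (shift_fam FF i j) FF.
rewrite lt0n sum_nat_eq0; apply: contra changed => /forall_inP fixed.
apply/eqP; rewrite -[RHS]imset_id; apply: eq_in_imset => F /fixed.
by rewrite eqb0 negbK => /eqP.
Qed.

Lemma exists_shifted_pair (P : {set {set 'I_k}} -> {set {set 'I_k}} -> Prop) FF GG :
  (forall FF GG (i j : 'I_k), i < j ->
     P FF GG -> P (shift_fam FF i j) (shift_fam GG i j)) ->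
  P FF GG -> exists FF' GG', [/\ P FF' GG', shifted FF' & shifted GG'].
Proof.
move=> shiftP; have [n] := ubnP (potential FF + potential GG).
elim: n FF GG => [|n IH] FF GG // pot_lt PFG.
pose moves (i j : 'I_k) :=
  (i < j) && ((shift_fam FF i j != FF) || (shift_fam GG i j != GG)).
have [/existsP[i /existsP[j /andP[ij moved]]]|fixed] :=
  boolP [exists i, exists j, moves i j].
  apply: IH (shiftP _ _ _ _ ij PFG).
  have := potential_shift_fam FF ij; have := potential_shift_fam GG ij.
  by case/orP: moved => /negbTE->; lia.
exists FF, GG; split=> // i j ij; apply/eqP;
  have /existsPn/(_ i)/existsPn/(_ j) := fixed;
  by rewrite /moves ij negb_or !negbK => /andP[].
Qed.

End Shifting.

Section CrossIntersectingBelow.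
Variables k t : nat.
Implicit Types (F G : {set 'I_k}) (FF GG : {set {set 'I_k}}).

Definition cross_t_intersecting_below (m : nat) FF GG :=
  forall F G, F \in FF -> G \in GG -> t <= #|[set x in F :&: G | x < m]|.

Lemma cross_t_intersecting_below_sym m FF GG :
  cross_t_intersecting_below m FF GG -> cross_t_intersecting_below m GG FF.
Proof. by move=> cross G F Gin Fin; rewrite setIC; apply: cross. Qed.

Lemma cross_t_intersecting_below_cross m FF GG :
  cross_t_intersecting_below m FF GG -> cross_t_intersecting t FF GG.
Proof.
move=> cross F G Fin Gin; apply: leq_trans (cross F G Fin Gin) _.
by apply/subset_leq_card/subsetP => x; rewrite inE => /andP[].
Qed.

Lemma cross_t_intersecting_below_shift_fixed m FF GG (i j : 'I_k) F G :
  i < j -> cross_t_intersecting_below m FF GG -> F \in FF -> G \in GG ->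
  shift_set GG i j G = G -> t <= #|[set x in shift_set FF i j F :&: G | x < m]|.
Proof.
move=> ij cross Fin Gin Gfixed; case: shift_setP => [|jF iF _]; first exact: cross.
have iFG : i \notin F :&: G by rewrite inE negb_and iF.
have FGj_sub : (F :&: G) :\ j \subset (i |: (F :\ j)) :&: G.
  by apply/subsetP => x; rewrite !inE => /andP[-> /andP[-> ->]]; rewrite orbT.
have [jG|jG] := boolP (j \in G); last first.
  apply: leq_trans (cross F G Fin Gin) (card_prefix_swap m ij iFG FGj_sub _).
  by rewrite inE (negbTE jG) andbF.
have [iG|iG] := boolP (i \in G).
  apply: leq_trans (cross F G Fin Gin) (card_prefix_swap m ij iFG FGj_sub _).
  by rewrite !inE eqxx iG.
(* G is fixed only because its own shift is already in GG *)
have GjiGG : i |: (G :\ j) \in GG.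
  apply/negPn/negP => notin; move: Gfixed; rewrite /shift_set jG iG notin /= => eqG.
  by move: iG; rewrite -eqG setU11.
have -> : (i |: (F :\ j)) :&: G = F :&: (i |: (G :\ j)).
  apply/setP => x; rewrite !inE; have [->|_] := eqVneq x i; last by rewrite andbCA andbA.
  by rewrite (negbTE iF) (negbTE iG).
exact: cross.
Qed.

Lemma cross_t_intersecting_below_shift m FF GG (i j : 'I_k) : i < j ->
  cross_t_intersecting_below m FF GG ->
  cross_t_intersecting_below m (shift_fam FF i j) (shift_fam GG i j).
Proof.
move=> ij cross _ _ /imsetP[F Fin ->] /imsetP[G Gin ->].
have [Gfixed|Gmoved] := eqVneq (shift_set GG i j G) G.
  by rewrite Gfixed; apply: cross_t_intersecting_below_shift_fixed Gfixed.
have [Ffixed|Fmoved] := eqVneq (shift_set FF i j F) F.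
  rewrite Ffixed setIC; apply: cross_t_intersecting_below_shift_fixed Ffixed => //.
  exact: cross_t_intersecting_below_sym.
move: Fmoved Gmoved; case: shift_setP => [|jF iF _]; first by rewrite eqxx.
case: shift_setP => [|jG iG _ _ _]; first by rewrite eqxx.
have iFG : i \notin F :&: G by rewrite inE negb_and iF.
apply: leq_trans (cross F G Fin Gin) (card_prefix_swap m ij iFG _ _).
  by apply/subsetP => x; rewrite !inE => /andP[-> /andP[-> ->]]; rewrite !orbT.
by rewrite !inE eqxx.
Qed.

End CrossIntersectingBelow.

Section NecessaryIntersectionPoints.
Variables k t : nat.
Implicit Types (F G : {set 'I_k}) (FF GG : {set {set 'I_k}}) (a b : 'I_k).

Lemma nip_pair_sym a F G : nip_pair t a F G = nip_pair t a G F.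
Proof. by rewrite /nip_pair setIC. Qed.

Lemma fam_a'_sym FF GG a : fam_a' t FF GG a = fam_a t GG FF a.
Proof.
apply/setP => G; rewrite !inE; congr (_ && _).
by apply/existsP/existsP => -[F]; exists F; rewrite nip_pair_sym.
Qed.

Lemma fam_a_sub FF GG a : fam_a t FF GG a \subset FF.
Proof. by apply/subsetP => F; rewrite inE => /andP[]. Qed.

Lemma mem_fam_a FF GG a F : F \in fam_a t FF GG a -> a \in F.
Proof.
by rewrite inE => /andP[_ /exists_inP[G _ /andP[_]]]; rewrite inE => /andP[].
Qed.

Lemma cross_t_intersecting_sym FF GG :
  cross_t_intersecting t FF GG -> cross_t_intersecting t GG FF.
Proof. by move=> cross G F Gin Fin; rewrite setIC; apply: cross. Qed.

Lemma max_nec_int_point_sym FF GG a :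
  max_nec_int_point t FF GG a -> max_nec_int_point t GG FF a.
Proof.
have nec_sym FF' GG' b : nec_int_point t FF' GG' b -> nec_int_point t GG' FF' b.
  by case=> F [G [Fin Gin nip]]; exists G, F; rewrite nip_pair_sym.
by case=> nec_a a_max; split=> [|b /nec_sym]; [apply: nec_sym | apply: a_max].
Qed.

Lemma max_nec_int_point_lt m FF GG a :
  cross_t_intersecting_below t m FF GG -> max_nec_int_point t FF GG a -> a < m.
Proof.
move=> cross [[F [G [Fin Gin /andP[/eqP card_a aFG]]]] _].
rewrite ltnNge; apply/negP => m_le_a; have := cross F G Fin Gin.
rewrite -card_a card_prefix_le aFG add1n; apply/negP; rewrite -ltnNge ltnS.
by apply/subset_leq_card/subsetP => x; rewrite !inE => /andP[-> /leq_trans]; apply.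
Qed.

Hypothesis t_gt0 : 0 < t.

Lemma exists_nip_pair FF GG F G : cross_t_intersecting t FF GG ->
  F \in FF -> G \in GG -> exists b, nip_pair t b F G.
Proof.
move=> cross Fin Gin; have [b bFG card_b] := exists_prefix_card t_gt0 (cross F G Fin Gin).
by exists b; rewrite /nip_pair card_b eqxx bFG.
Qed.

Lemma exists_max_nec_int_point FF GG : FF != set0 -> GG != set0 ->
  cross_t_intersecting t FF GG -> exists a, max_nec_int_point t FF GG a.
Proof.
case/set0Pn=> F Fin /set0Pn[G Gin] cross.
pose nec := [pred b | [exists F in FF, exists G in GG, nip_pair t b F G]].
have necP b : reflect (nec_int_point t FF GG b) (nec b).
  apply: (iffP exists_inP) => [[F' F'in /exists_inP[G' G'in nip]]|].
    by exists F', G'.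
  by case=> F' [G' [F'in G'in nip]]; exists F'; last by apply/exists_inP; exists G'.
have [b0 nip0] := exists_nip_pair cross Fin Gin.
have nec_b0 : nec b0 by apply/necP; exists F, G.
case: (arg_maxnP (fun b : 'I_k => val b) nec_b0) => a /necP nec_a a_max.
by exists a; split=> // b /necP /a_max.
Qed.

End NecessaryIntersectionPoints.

Lemma weight_setD (R : numDomainType) (w : nat -> R) k (A B : {set {set 'I_k}}) :
  B \subset A -> weight w A = (weight w B + weight w (A :\: B))%R.
Proof. by move=> BA; rewrite /weight (big_setID B) (setIidPr BA). Qed.

Section TrimmedFamilies.
Variables (k t : nat) (FF GG : {set {set 'I_k}}) (a : 'I_k).
Hypotheses (t_gt0 : 0 < t) (cross : cross_t_intersecting t FF GG)
  (a_max : max_nec_int_point t FF GG a).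
Implicit Types (F G : {set 'I_k}).

Lemma card_prefix_le_max_ge F G : F \in FF -> G \in GG ->
  t <= #|[set x in F :&: G | x <= a]|.
Proof.
move=> Fin Gin; have [b nip_b] := exists_nip_pair t_gt0 cross Fin Gin.
have b_le_a : b <= a by apply: (proj2 a_max); exists F, G.
case/andP: nip_b => /eqP <- _; apply/subset_leq_card/subsetP => x; rewrite !inE.
by case/andP=> -> x_le_b; apply: leq_trans x_le_b b_le_a.
Qed.

Lemma card_prefix_lt_max_ge F G :
  F \in FF -> G \in GG -> G \notin fam_a' t FF GG a ->
  t <= #|[set x in F :&: G | x < a]|.
Proof.
move=> Fin Gin GnotGa; have := card_prefix_le_max_ge Fin Gin.
rewrite card_prefix_le; case: (boolP (a \in F :&: G)) => // aFG.
rewrite add1n leq_eqVlt ltnS => /orP[/eqP t_eq|//]; case/negP: GnotGa.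
rewrite inE Gin; apply/exists_inP; exists F => //.
by rewrite /nip_pair card_prefix_le aFG t_eq eqxx.
Qed.

Lemma setD1_max_notin F : F \in fam_a t FF GG a -> F :\ a \notin FF.
Proof.
rewrite inE => /andP[Fin /exists_inP[G Gin /andP[/eqP card_a aFG]]].
apply/negP => FaFF; have := card_prefix_le_max_ge FaFF Gin.
rewrite card_prefix_le !inE eqxx /= add0n card_prefix_lt_setD1I.
by rewrite -card_a card_prefix_le aFG add1n ltnn.
Qed.

Definition trim_fam := FF :|: [set F :\ a | F in fam_a t FF GG a].

Lemma trim_fam_card_le (l : nat) : (forall F, F \in FF -> #|F| <= l) ->
  forall F, F \in trim_fam -> #|F| <= l.
Proof.
move=> FF_le F; rewrite inE => /orP[/FF_le //|/imsetP[F' F'in ->]].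
apply: leq_trans (subset_leq_card (subD1set _ _)) (FF_le _ _).
exact: subsetP (fam_a_sub _ _ _ _) _ F'in.
Qed.

Lemma cross_t_intersecting_below_trim :
  cross_t_intersecting_below t a trim_fam (GG :\: fam_a' t FF GG a).
Proof.
move=> X G; rewrite in_setU in_setD => /orP[XF|/imsetP[F Fin ->]] /andP[GnotGa Gin].
  exact: card_prefix_lt_max_ge.
rewrite card_prefix_lt_setD1I; apply: card_prefix_lt_max_ge => //.
exact: subsetP (fam_a_sub _ _ _ _) _ Fin.
Qed.

Lemma weight_trim_fam (R : numDomainType) (w : nat -> R) :
  (forall i j, i <= j -> j <= k -> (w j <= w i)%R) ->
  (weight w FF + weight w (fam_a t FF GG a) <= weight w trim_fam)%R.
Proof.
move=> w_noninc.
have disj : [disjoint FF & [set F :\ a | F in fam_a t FF GG a]].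
  rewrite -setI_eq0; apply/eqP/setP => X; rewrite !inE.
  apply/negP => /andP[XF /imsetP[F Fin eX]].
  by move: XF; rewrite eX (negbTE (setD1_max_notin Fin)).
have -> : weight w trim_fam =
    (weight w FF + weight w [set F :\ a | F in fam_a t FF GG a])%R.
  by rewrite /weight -bigU //=; apply: eq_bigl => X; rewrite !inE.
rewrite lerD2l /weight big_imset /=; last first.
  move=> F1 F2 /mem_fam_a aF1 /mem_fam_a aF2 eF.
  by rewrite -(setD1K aF1) -(setD1K aF2) eF.
apply: ler_sum => F _; apply: w_noninc; first exact/subset_leq_card/subD1set.
by rewrite -[X in _ <= X]card_ord max_card.
Qed.

End TrimmedFamilies.

Section LoweredPairs.
Variables (R : realFieldType) (k t l l' : nat) (w1 w2 : nat -> R).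
Implicit Types (FF GG : {set {set 'I_k}}).

Definition lowered_pair (W : R) (m : nat) FF GG :=
  [/\ (forall F, F \in FF -> #|F| <= l) /\ (forall G, G \in GG -> #|G| <= l'),
      FF != set0, GG != set0, cross_t_intersecting_below t m FF GG
    & (W <= weight w1 FF + weight w2 GG)%R].

Lemma lowered_pair_shift W m FF GG (i j : 'I_k) : i < j ->
  lowered_pair W m FF GG -> lowered_pair W m (shift_fam FF i j) (shift_fam GG i j).
Proof.
move=> ij [[FF_le GG_le] FF_n0 GG_n0 cross heavy].
split; rewrite ?shift_fam_eq0 ?weight_shift_fam //.
  by split; apply: shift_fam_card_le.
exact: cross_t_intersecting_below_shift.
Qed.

Lemma exists_lowered_pair FF GG (a : 'I_k) : 0 < t ->
  (forall i j, i <= j -> j <= k -> (w1 j <= w1 i)%R) ->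
  (forall i j, i <= j -> j <= k -> (w2 j <= w2 i)%R) ->
  (forall F, F \in FF -> #|F| <= l) -> (forall G, G \in GG -> #|G| <= l') ->
  cross_t_intersecting t FF GG -> max_nec_int_point t FF GG a ->
  FF :\: fam_a t FF GG a != set0 -> GG :\: fam_a' t FF GG a != set0 ->
  exists FF' GG', lowered_pair (weight w1 FF + weight w2 GG) a FF' GG'.
Proof.
move=> t_gt0 w1_noninc w2_noninc FF_le GG_le cross a_max FFa_n0 GGa_n0.
have n0D (A B : {set {set 'I_k}}) : A :\: B != set0 -> A != set0.
  by apply: contraNneq => ->; rewrite set0D.
rewrite fam_a'_sym in GGa_n0 *; set Fa := fam_a t FF GG a; set Ga := fam_a t GG FF a.
have [Ga_le_Fa|Fa_lt_Ga] := lerP (weight w2 Ga) (weight w1 Fa).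
  exists (trim_fam t FF GG a), (GG :\: Ga); split.
  - by split=> [|G /setDP[/GG_le]] //; apply: trim_fam_card_le.
  - by rewrite setU_eq0 negb_and (n0D _ _ FFa_n0).
  - exact: GGa_n0.
  - by rewrite /Ga -fam_a'_sym; apply: cross_t_intersecting_below_trim.
  - rewrite (weight_setD w2 (fam_a_sub t GG FF a)).
    have := weight_trim_fam t_gt0 cross a_max w1_noninc; lra.
exists (FF :\: Fa), (trim_fam t GG FF a); split.
- by split=> [F /setDP[/FF_le]|] //; apply: trim_fam_card_le.
- exact: FFa_n0.
- by rewrite setU_eq0 negb_and (n0D _ _ GGa_n0).
- apply: cross_t_intersecting_below_sym; rewrite /Fa -fam_a'_sym.
  apply: cross_t_intersecting_below_trim => //; first exact: cross_t_intersecting_sym.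
  exact: max_nec_int_point_sym.
- rewrite (weight_setD w1 (fam_a_sub t FF GG a)).
  have := weight_trim_fam t_gt0 (cross_t_intersecting_sym cross)
    (max_nec_int_point_sym a_max) w2_noninc; lra.
Qed.

End LoweredPairs.


Theorem lemma3p5 (R : realFieldType) (k l l' t : nat)
  (w1 w2 : nat -> R) (FF GG : {set {set 'I_k}}) (a : 'I_k) :
  l <= k -> l' <= l -> t <= l' -> 1 <= t ->
  (forall i, i <= k -> (0 <= w1 i)%R) ->
  (forall i, i <= k -> (0 <= w2 i)%R) ->
  (forall i j, i <= j -> j <= k -> (w1 j <= w1 i)%R) ->
  (forall i j, i <= j -> j <= k -> (w2 j <= w2 i)%R) ->
  (forall F, F \in FF -> #|F| <= l) ->
  (forall G, G \in GG -> #|G| <= l') ->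
  FF != set0 -> GG != set0 ->
  cross_t_intersecting t FF GG ->
  max_nec_int_point t FF GG a ->
  t + 1 <= a + 1 ->
  FF :\: fam_a t FF GG a != set0 ->
  GG :\: fam_a' t FF GG a != set0 ->
  exists FF' GG' : {set {set 'I_k}},
    [/\ (forall F, F \in FF' -> #|F| <= l) /\
        (forall G, G \in GG' -> #|G| <= l'),
        [/\ FF' != set0, GG' != set0 & cross_t_intersecting t FF' GG'],
        (weight w1 FF + weight w2 GG <= weight w1 FF' + weight w2 GG')%R,
        (exists a' : 'I_k, max_nec_int_point t FF' GG' a' /\ a' < a)
      & shifted FF' /\ shifted GG'].
Proof.
move=> _ _ _ t_gt0 _ _ w1_noninc w2_noninc FF_le GG_le _ _ cross a_max _ FFa_n0 GGa_n0.
have [FF1 [GG1 lowered1]] := exists_lowered_pair t_gt0 w1_noninc w2_noninc FF_le GG_le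
  cross a_max FFa_n0 GGa_n0.
have [FF' [GG' [[sizes FF'_n0 GG'_n0 cross_below heavier] FF'_shifted GG'_shifted]]] :=
  exists_shifted_pair (@lowered_pair_shift R k t l l' w1 w2 _ a) lowered1.
have cross' := cross_t_intersecting_below_cross cross_below.
have [a' a'_max] := exists_max_nec_int_point t_gt0 FF'_n0 GG'_n0 cross'.
exists FF', GG'; split=> //; exists a'; split=> //.
exact: max_nec_int_point_lt cross_below a'_max.
Qed.
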